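(* There exist universal constants $c,C>0$ with the following property. Suppose that $m,n\in\mathbb{N}$ satisfy $4\le m\le n$ and $n\ge (m\log m)/4$. Then there exist $s\in\mathbb{N}$ with $s\ge c\,m^2/n$ and an $m$-by-$n$ matrix $B$ with integer entries and of rank $m$, such that any $s$ of the columns of $B$ are linearly independent and $$\|B\|_{\ell_2^n\to\ell_2^m}\le C\sqrt{\frac{n}{m}}.$$
   Context: $\|B\|_{\ell_2^n\to\ell_2^m}$ denotes the operator norm of $B$ from $\mathbb{R}^n$ to $\mathbb{R}^m$, both equipped with the Euclidean norm. $\log$ is the natural logarithm. *)

From HB Require Import structures.
From mathcomp Require Import all_boot all_order all_algebra.
From mathcomp Require Import all_classical all_reals all_analysis.
From mathcomp Require Import Rstruct.
Set Implicit Arguments. Unset Strict Implicit. Unset Printing Implicit Defensive.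
Import Order.TTheory GRing.Theory Num.Theory.
Local Open Scope ring_scope.
Local Open Scope classical_set_scope.

Notation RR := Rdefinitions.R.

Definition norm2 (n : nat) (x : 'cV[RR]_n) : RR :=
  Num.sqrt (\sum_(i < n) (x i 0) ^+ 2).

Definition opnorm (m n : nat) (B : 'M[RR]_(m, n)) : RR :=
  sup [set norm2 (B *m x) | x in [set x : 'cV[RR]_n | norm2 x <= 1]].

Definition intmx (m n : nat) (B : 'M[int]_(m, n)) : 'M[RR]_(m, n) :=
  map_mx (fun z : int => z%:~R) B.

From HB Require Import structures.
From mathcomp Require Import all_boot all_order all_algebra.
From mathcomp Require Import all_classical all_reals all_analysis.
From mathcomp Require Import Rstruct.
From mathcomp Require Import ring lra zify.
Import Order.TTheory GRing.Theory Num.Theory.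
Local Open Scope ring_scope.
Set Implicit Arguments. Unset Strict Implicit. Unset Printing Implicit Defensive.

(* Take B = [7 I_m | 0] + A, where every column j of A records the rows hit
   by six "slots" (j, 0), ..., (j, 5).  The block 7 I_m dominates the at most 6
   other entries of its column, so rank B = m.  Column sums of B are at most 13
   and row sums at most 7 + L, where L bounds the number of slots landing in a
   row, so Schur's test gives ||B|| <= sqrt (13 (L + 6)) = O(sqrt (n / m)) for
   L ~ 96 n / m.  If every set of at most s columns has a unique neighbour (a
   row meeting exactly one of them), then any s columns are independent.  A set
   S without unique neighbour sends its 6|S| slots into at most 4|S| rows; a
   union bound over heavy rows and over such S, with C(N, k) <= (4N / k)^k,
   shows that some slot map avoids both for s ~ m^2 / n, the hypothesis
   m log m <= 4n being what makes heavy rows rare. *)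

Lemma expR1_le4 (R : realType) : expR (1 : R) <= 4.
Proof.
have half_le2 : expR (2^-1 : R) <= 2.
  have e_gt0 := expR_gt0 (2^-1 : R).
  have := expR_ge1Dx (- 2^-1 : R); rewrite expRN => h.
  have : (1 - 2^-1) * expR (2^-1 : R) <= 1.
    by rewrite -[X in _ <= X](mulVf (lt0r_neq0 e_gt0)) ler_wpM2r // ltW.
  lra.
have -> : (1 : R) = 2^-1 + 2^-1 by field.
rewrite exp.expRD; have := expR_gt0 (2^-1 : R); nra.
Qed.

Lemma expnS_self_le4 (k : nat) : (k.+1 ^ k <= 4 * k ^ k)%N.
Proof.
case: k => [//|k]; rewrite -(@ler_nat RR) natrM !natrX.
set a : RR := k.+1%:R; have a_gt0 : 0 < a by rewrite ltr0n.
have -> : k.+2%:R = a * (1 + a^-1) by rewrite mulrDr mulr1 mulfV ?gt_eqF // -natr1 addrC.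
rewrite exprMn mulrC ler_pM2r ?exprn_gt0 //; apply: le_trans (expR1_le4 RR).
rewrite -[X in expR X](mulfV (lt0r_neq0 a_gt0)) expRM_natl.
by apply: lerXn2r; rewrite ?nnegrE ?expR_ge0 ?addr_ge0 ?invr_ge0 ?ler0n ?expR_ge1Dx.
Qed.

Lemma expn_self_le_fact (k : nat) : (k ^ k <= 4 ^ k * k`!)%N.
Proof.
elim: k => [//|k IH]; rewrite !expnS factS.
rewrite (leq_trans (leq_mul (leqnn _) (expnS_self_le4 k))) //.
by rewrite mulnCA -mulnA leq_mul2l -mulnCA leq_mul2l IH !orbT.
Qed.

Lemma leq_ffact_expn (N k : nat) : (N ^_ k <= N ^ k)%N.
Proof.
have -> : (N ^ k = \prod_(i < k) N)%N by rewrite prod_nat_const card_ord.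
by rewrite ffact_prod; apply: leq_prod => i _; rewrite leq_subr.
Qed.

Lemma leq_bin_expn (N k : nat) : ('C(N, k) * k ^ k <= 4 ^ k * N ^ k)%N.
Proof.
rewrite (leq_trans (leq_mul (leqnn _) (expn_self_le_fact k))) //.
by rewrite mulnCA leq_mul2l bin_ffact leq_ffact_expn orbT.
Qed.

Lemma sum_ord_eqn (p k : nat) : (\sum_(i < p) ((i : nat) == k) = (k < p))%N.
Proof.
case: ltnP => [kp | pk].
  rewrite (bigD1 (Ordinal kp)) //= eqxx big1 // => i; apply: contraNeq.
  by rewrite eqb0 negbK => /eqP ik; apply/eqP/val_inj.
apply/eqP; rewrite sum_nat_eq0; apply/forallP => i; apply/implyP => _.
by rewrite eqb0 ltn_eqF // (leq_trans (ltn_ord i)).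
Qed.

(* [sum_(t < s) b t <= M (1 - 4^-s) / 3] with denominators cleared. *)
Lemma geometric_sum_leq (M s : nat) (b : nat -> nat) :
  (forall t, t < s -> 4 ^ t.+1 * b t <= M)%N ->
  (3 * 4 ^ s * \sum_(t < s) b t + M <= M * 4 ^ s)%N.
Proof.
elim: s => [|s IH] b_le; first by rewrite big_ord0 muln0 expn0 muln1.
have := IH (fun t ts => b_le t (ltnW ts)); have := b_le s (ltnSn s).
rewrite big_ord_recr /= !expnS; nia.
Qed.

Lemma ltn_add_geometric_sum (M a s : nat) (b : nat -> nat) :
  (0 < M)%N -> (4 * a <= M)%N -> (forall t, t < s -> 4 ^ t.+1 * b t <= M)%N ->
  (a + \sum_(t < s) b t < M)%N.
Proof.
move=> M_gt0 a_le /geometric_sum_leq geom.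
have : (3 * \sum_(t < s) b t < M)%N.
  by rewrite -(ltn_pmul2l (expn_gt0 4 s)); nia.
lia.
Qed.

Lemma leq_scaled_bound (N c k r M : nat) :
  (0 < r)%N -> (N * r <= c * M)%N -> (k * c <= r)%N -> (k * N <= M)%N.
Proof. move=> r_gt0 Nr kc; rewrite -(leq_pmul2r r_gt0); nia. Qed.

Lemma leq_mul_sqr_divn (K m n : nat) :
  (m <= n)%N -> (K * (m ^ 2 %/ (K * n)) <= m)%N.
Proof.
move=> hmn; have [-> | m_gt0] := posnP m; first by rewrite div0n muln0.
rewrite -(leq_pmul2r m_gt0) mulnn (leq_trans (leq_mul (leqnn _) hmn)) //.
by rewrite mulnAC mulnC leq_trunc_div.
Qed.

Lemma ler_maxn1_divn (R : realFieldType) (a b c : nat) :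
  (0 < b)%N -> (0 < c)%N ->
  (2 * c)%N%:R^-1 * a%:R / b%:R <= (maxn 1 (a %/ (c * b)))%:R :> R.
Proof.
move=> b_gt0 c_gt0; have cb_gt0 : (0 < c * b)%N by rewrite muln_gt0 b_gt0 c_gt0.
rewrite ler_pdivrMr ?ltr0n // mulrC ler_pdivrMr ?ltr0n ?muln_gt0 // -!natrM ler_nat.
have := ltn_ceil a cb_gt0; have := leq_maxl 1 (a %/ (c * b)); have := leq_maxr 1 (a %/ (c * b)).
nia.
Qed.

Lemma subset_of_card (T : finType) (A : {set T}) (k : nat) :
  (k <= #|A|)%N -> exists2 B : {set T}, B \subset A & #|B| = k.
Proof.
case/card_geqP => s [s_uniq s_size sA]; exists [set x in s].
  by apply/fintype.subsetP => x; rewrite inE => /sA.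
by rewrite cardsE (card_uniqP s_uniq).
Qed.

Lemma superset_of_card (T : finType) (A : {set T}) (k : nat) :
  (#|A| <= k <= #|T|)%N -> exists2 W : {set T}, A \subset W & #|W| = k.
Proof.
case/andP => Ak kT.
have [B BAc cardB] : exists2 B : {set T}, B \subset ~: A & #|B| = (k - #|A|)%N.
  by apply: subset_of_card; move: (cardsC A); lia.
exists (A :|: B); first exact: finset.subsetUl.
rewrite cardsU; suff -> : A :&: B = finset.set0 by rewrite cards0 subn0 cardB subnKC.
by apply/finset.setP => x; rewrite !inE; apply/andP => -[xA /(fintype.subsetP BAc)]; rewrite inE xA.
Qed.

Lemma leq_card_bigcup (I T : finType) (P : pred I) (E : I -> {set T}) :
  (#|\bigcup_(i | P i) E i| <= \sum_(i | P i) #|E i|)%N.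
Proof.
apply: (big_ind2 (fun (A : {set T}) k => #|A| <= k)%N) => //; first by rewrite cards0.
by move=> A a B b hA hB; rewrite (leq_trans (leq_card_setU A B).1) ?leq_add.
Qed.

Lemma sum_card_fibres (T U : finType) (P : {set T}) (g : T -> U) :
  (\sum_u #|[set x in P | g x == u]| = #|P|)%N.
Proof.
rewrite -sum1_card (partition_big g predT) //=.
by apply: eq_bigr => u _; rewrite -sum1_card; apply: eq_bigl => x; rewrite inE.
Qed.

Definition maps_into (aT rT : finType) (A : {set aT}) (W : {set rT}) :
    {set {ffun aT -> rT}} :=
  [set F : {ffun aT -> rT} | [forall x in A, F x \in W]].

(* Multiplied out to avoid the truncated difference [#|aT| - #|A|]. *)
Lemma card_maps_into (aT rT : finType) (A : {set aT}) (W : {set rT}) :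
  (#|maps_into A W| * #|rT| ^ #|A| = #|W| ^ #|A| * #|rT| ^ #|aT|)%N.
Proof.
pose P x := if x \in A then mem W else mem [set: rT].
have -> : #|maps_into A W| = #|family P|.
  apply: eq_card => F; rewrite inE; apply/forallP/familyP => FP x; move: (FP x);
    by rewrite /P; case: (x \in A).
rewrite card_family foldrE big_map big_enum /= (bigID (mem A)) /=.
rewrite (eq_bigr (fun _ => #|W|)) => [|x xA]; last by rewrite /P xA.
rewrite [X in (_ * X * _)%N](eq_bigr (fun _ => #|rT|)) => [|x xA]; last by rewrite /P (negbTE xA) cardsT.
rewrite !prod_nat_const -mulnA -expnD -cardsE.
by rewrite -(cardsC A) addnC; congr (_ * _ ^ (_ + _))%N; apply: eq_card => x; rewrite inE.
Qed.

Lemma card_bigcup_maps_into (aT rT I J : finType) (P : pred I) (Q : pred J)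
    (A : I -> {set aT}) (W : J -> {set rT}) (a w : nat) :
  (forall i, P i -> #|A i| = a) -> (forall j, Q j -> #|W j| = w) ->
  (#|\bigcup_(i | P i) \bigcup_(j | Q j) maps_into (A i) (W j)| * #|rT| ^ a
     <= #|P| * #|Q| * (w ^ a * #|rT| ^ #|aT|))%N.
Proof.
move=> cardA cardW; rewrite (leq_trans (leq_mul (leq_card_bigcup _ _) (leqnn _))) //.
rewrite big_distrl -mulnA -sum_nat_const /=; apply: leq_sum => i Pi.
rewrite (leq_trans (leq_mul (leq_card_bigcup _ _) (leqnn _))) //.
rewrite big_distrl -sum_nat_const /=; apply: eq_leq; apply: eq_bigr => j Qj.
by rewrite -(cardA i Pi) -(cardW j Qj) card_maps_into.
Qed.

Lemma card_sized_sets (T : finType) (k : nat) :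
  #|(fun A : {set T} => #|A| == k)| = 'C(#|T|, k).
Proof. by rewrite -card_draws; apply: eq_card => A; rewrite inE. Qed.

(** * Norm and rank criteria for matrices *)

Lemma sqr_wsum_le (R : realFieldType) (I : finType) (b y : I -> R) :
  (forall i, 0 <= b i) ->
  (\sum_i b i * y i) ^+ 2 <= (\sum_i b i) * \sum_i b i * y i ^+ 2.
Proof.
move=> b_ge0.
have : 0 <= \sum_i \sum_j b i * b j * (y i - y j) ^+ 2.
  by do 2!(apply: sumr_ge0 => ? _); rewrite mulr_ge0 ?sqr_ge0 ?mulr_ge0.
have -> : \sum_i \sum_j b i * b j * (y i - y j) ^+ 2 =
    (\sum_i b i) * (\sum_i b i * y i ^+ 2) + (\sum_i b i * y i ^+ 2) * (\sum_i b i)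
    - 2 * (\sum_i b i * y i) ^+ 2.
  rewrite expr2 !big_distrlr mulr_sumr -big_split -sumrB /=.
  apply: eq_bigr => i _; rewrite mulr_sumr -big_split -sumrB /=.
  by apply: eq_bigr => j _; ring.
lra.
Qed.

Lemma opnorm_le_schur (m n : nat) (B : 'M[RR]_(m, n)) (r c : RR) :
  (forall i j, 0 <= B i j) -> (forall i, \sum_j B i j <= r) ->
  (forall j, \sum_i B i j <= c) -> 0 <= r -> 0 <= c ->
  opnorm B <= Num.sqrt (r * c).
Proof.
move=> B_ge0 row_le col_le r_ge0 c_ge0; apply: ge_sup.
  exists (norm2 (B *m 0)), 0 => //=.
  by rewrite /norm2 big1 ?sqrtr0 // => i _; rewrite mxE expr0n.
move=> _ [x /= x_le1 <-]; rewrite /norm2 ler_sqrt ?mulr_ge0 //.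
rewrite /norm2 -sqrtr1 ler_sqrt // in x_le1.
have Bx_ge0 i j : 0 <= B i j * x j 0 ^+ 2 by rewrite mulr_ge0 ?sqr_ge0.
apply: (@le_trans _ _ (\sum_i (\sum_j B i j) * (\sum_j B i j * x j 0 ^+ 2))).
  by apply: ler_sum => i _; rewrite mxE sqr_wsum_le.
apply: (@le_trans _ _ (\sum_i r * \sum_j B i j * x j 0 ^+ 2)).
  by apply: ler_sum => i _; rewrite ler_wpM2r ?row_le ?sumr_ge0.
rewrite -mulr_sumr exchange_big /= ler_wpM2l //.
apply: (@le_trans _ _ (\sum_j c * x j 0 ^+ 2)).
  by apply: ler_sum => j _; rewrite -mulr_suml ler_wpM2r ?sqr_ge0.
by rewrite -mulr_sumr -[X in _ <= X]mulr1 ler_wpM2l.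
Qed.

Lemma rank_col_diag_dominant (R : realFieldType) (m n : nat) (hmn : (m <= n)%N)
    (A : 'M[R]_(m, n)) :
  (forall i, \sum_(k | k != i) `|A k (widen_ord hmn i)| < `|A i (widen_ord hmn i)|) ->
  \rank A = m.
Proof.
(* At a coordinate i of maximal modulus of v, where v *m A = 0, column i gives
   |v_i| |A_ii| <= |v_i| sum_(k != i) |A_ki|. *)
move=> dom; apply/eqP/inj_row_free => v vA0; apply/rowP => k; rewrite mxE.
apply/eqP/negPn/negP => vk_neq0.
have [i _ vi_max] := @arg_maxP _ _ _ k predT (fun k => `|v 0 k|) isT.
set j := widen_ord hmn i.
have vi_gt0 : 0 < `|v 0 i| by apply: lt_le_trans (vi_max k isT); rewrite normr_gt0.
have := congr1 (fun M : 'rV_n => M 0 j) vA0; rewrite !mxE (bigD1 i) //= => /eqP.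
rewrite addr_eq0 => /eqP /(congr1 Num.norm); rewrite normrN normrM => vAi.
have := dom i; rewrite -/j -(ltr_pM2l vi_gt0) vAi mulr_sumr; apply/negP; rewrite -leNgt.
apply: le_trans (ler_norm_sum _ _ _) _; apply: ler_sum => l _.
by rewrite normrM; apply: ler_wpM2r; [exact: normr_ge0 | exact: vi_max].
Qed.

Definition unique_neighbour (m n : nat) (E : 'I_m -> 'I_n -> bool) (s : nat) : Prop :=
  forall S : {set 'I_n}, (0 < #|S| <= s)%N -> exists i, #|[set j in S | E i j]| = 1%N.

Lemma rank_colsub_unique_neighbour (K : fieldType) (m n s : nat) (A : 'M[K]_(m, n))
    (f : 'I_s -> 'I_n) :
  injective f -> unique_neighbour (fun i j => A i j != 0) s -> \rank (colsub f A) = s.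
Proof.
(* A unique neighbour i of the columns in the support of v sees a single
   nonzero term in (v *m (colsub f A)^T) 0 i. *)
move=> f_inj uA; rewrite -mxrank_tr; apply/eqP/inj_row_free => v vA0.
apply/rowP => k0; rewrite mxE; apply/eqP/negPn/negP => vk0.
set S := f @: [set k | v 0 k != 0].
have [|i /eqP/cards1P [j Si]] := uA S.
  rewrite card_imset // (leq_trans (max_card _)) ?card_ord // andbT.
  by apply/card_gt0P; exists k0; rewrite inE.
have : j \in [set j in S | A i j != 0] by rewrite Si set11.
rewrite inE => /andP [/imsetP [k vk jE] Aij]; rewrite inE in vk; subst j.
have := congr1 (fun M : 'rV_m => M 0 i) vA0; rewrite !mxE (bigD1 k) //= big1 ?addr0.
  by apply/eqP; rewrite !mxE mulf_eq0 negb_or vk.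
move=> l lk; rewrite !mxE.
have [-> | vl] := eqVneq (v 0 l) 0; first by rewrite mul0r.
suff -> : A i (f l) = 0 by rewrite mulr0.
apply/eqP/negPn/negP => Ail.
have : f l \in [set j in S | A i j != 0] by rewrite inE Ail imset_f // inE.
by rewrite Si => /set1P /f_inj lk_eq; rewrite lk_eq eqxx in lk.
Qed.

Lemma unique_neighbour_maxn1 (m n s : nat) (E : 'I_m -> 'I_n -> bool) :
  (forall j, exists i, E i j) -> unique_neighbour E s -> unique_neighbour E (maxn 1 s).
Proof.
move=> E_total uE S /andP [S_gt0]; rewrite leq_max => /orP [S_le1 | S_le_s].
  have /cards1P [j ->] : #|S| == 1%N by rewrite eqn_leq S_le1.
  have [i Eij] := E_total j; exists i; apply/eqP/cards1P; exists j.
  by apply/finset.setP => j'; rewrite !inE; case: eqP => // ->.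
by apply: uE; rewrite S_gt0.
Qed.

(** * The design matrix *)

Section Design.

Variables (m n : nat) (F : {ffun 'I_n * 'I_6 -> 'I_m}).

(* The slots (j, l) of column j land in rows F (j, l); the diagonal weight 7
   exceeds the total weight 6 of the slots of a column. *)
Definition design_weight (i : 'I_m) (j : 'I_n) : nat :=
  7 * ((i : nat) == j) + \sum_(l < 6) (F (j, l) == i).

Definition design_mx : 'M[int]_(m, n) := \matrix_(i, j) (design_weight i j)%:Z.

Definition adjacent (i : 'I_m) (j : 'I_n) : bool :=
  ((i : nat) == j) || [exists l, F (j, l) == i].

Definition load (i : 'I_m) : nat := #|[set x | F x == i]|.

Lemma intmx_design_mx i j : intmx design_mx i j = (design_weight i j)%:R.
Proof. by rewrite !mxE. Qed.

Lemma design_mx_neq0 i j : (intmx design_mx i j != 0) = adjacent i j.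
Proof.
rewrite intmx_design_mx pnatr_eq0 /design_weight /adjacent addn_eq0 muln_eq0 /=.
rewrite sum_nat_eq0 negb_and eqb0 negbK negb_forall; congr (_ || _).
by apply: eq_existsb => l; rewrite eqb0 negbK.
Qed.

Lemma sum_slot_hits j : (\sum_i \sum_(l < 6) (F (j, l) == i) = 6)%N.
Proof.
rewrite exchange_big /= -[RHS]card_ord -sum1_card; apply: eq_bigr => l _.
by rewrite (bigD1 (F (j, l))) //= eqxx big1 // => i; rewrite eq_sym => /negbTE ->.
Qed.

Lemma col_sum_design_weight j : (\sum_i design_weight i j <= 13)%N.
Proof.
by rewrite big_split -big_distrr /= sum_slot_hits sum_ord_eqn; case: (_ < _)%N.
Qed.

Lemma row_sum_design_weight i : (\sum_j design_weight i j <= 7 + load i)%N.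
Proof.
rewrite big_split -big_distrr /=; apply: leq_add.
  under eq_bigr do rewrite eq_sym.
  by rewrite sum_ord_eqn -[X in (_ <= X)%N]muln1 leq_mul2l leq_b1 orbT.
rewrite pair_bigA /= /load -sum1_card [X in (_ <= X)%N]big_mkcond /=.
by apply: eq_leq; apply: eq_bigr => x _; rewrite inE -surjective_pairing; case: eqP.
Qed.

Lemma rank_design_mx : (m <= n)%N -> \rank (intmx design_mx) = m.
Proof.
move=> hmn; apply: (@rank_col_diag_dominant RR _ _ hmn) => i.
set j := widen_ord hmn i.
under eq_bigr do rewrite intmx_design_mx normr_nat.
rewrite intmx_design_mx normr_nat -natr_sum ltr_nat.
apply: (@leq_ltn_trans 6); last by rewrite /design_weight eqxx leq_addr.
rewrite -(sum_slot_hits j) [X in (_ <= X)%N](bigD1 i) //= (leq_trans _ (leq_addl _ _)) //.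
apply: eq_leq; apply: eq_bigr => k ki.
by rewrite /design_weight /= (inj_eq val_inj) (negbTE ki).
Qed.

Lemma opnorm_design_mx (L : nat) :
  (forall i, load i < L)%N -> opnorm (intmx design_mx) <= Num.sqrt ((L + 6)%N%:R * 13).
Proof.
move=> load_lt; apply: opnorm_le_schur => [i j | i | j | |]; rewrite ?ler0n //.
- by rewrite intmx_design_mx ler0n.
- under eq_bigr do rewrite intmx_design_mx.
  rewrite -natr_sum ler_nat (leq_trans (row_sum_design_weight i)) //.
  by have := load_lt i; lia.
- under eq_bigr do rewrite intmx_design_mx.
  by rewrite -natr_sum ler_nat col_sum_design_weight.
Qed.

Lemma rank_colsub_design_mx (s : nat) (f : 'I_s -> 'I_n) :
  injective f -> unique_neighbour adjacent s -> \rank (colsub f (intmx design_mx)) = s.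
Proof.
move=> f_inj uF; apply: rank_colsub_unique_neighbour => // S /uF [i Si]; exists i.
by rewrite -Si; apply: eq_card => j; rewrite !inE design_mx_neq0.
Qed.

Lemma unique_neighbour_design_maxn1 (s : nat) :
  unique_neighbour adjacent s -> unique_neighbour adjacent (maxn 1 s).
Proof.
apply: unique_neighbour_maxn1 => j; exists (F (j, ord0)).
by apply/orP; right; apply/existsP; exists ord0.
Qed.

End Design.

Definition slots (n : nat) (S : {set 'I_n}) : {set 'I_n * 'I_6} := [set x | x.1 \in S].

Lemma card_slots (n : nat) (S : {set 'I_n}) : #|slots S| = (6 * #|S|)%N.
Proof.
have -> : slots S = finset.setX S [set: 'I_6] by apply/finset.setP => -[j l]; rewrite !inE andbT.
by rewrite cardsX cardsT card_ord mulnC.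
Qed.

Section NoUniqueNeighbour.

Variables (m n : nat) (hmn : (m <= n)%N) (F : {ffun 'I_n * 'I_6 -> 'I_m}) (S : {set 'I_n}).
Hypothesis no_unique : forall i, #|[set j in S | adjacent F i j]| != 1%N.

Lemma slot_fibre_ge2 (i : 'I_m) :
  i \in F @: slots S -> widen_ord hmn i \notin S ->
  (1 < #|[set x in slots S | F x == i]|)%N.
Proof.
case/imsetP => x0; rewrite inE => x0S Fx0 iS.
have slot_of j : j \in S -> adjacent F i j -> exists l, F (j, l) == i.
  move=> jS /orP [/eqP ij | /existsP //]; case/negP: iS.
  by rewrite (_ : widen_ord hmn i = j) //; apply: val_inj.
have : (1 < #|[set j in S | adjacent F i j]|)%N.
  have : (0 < #|[set j in S | adjacent F i j]|)%N.
    apply/card_gt0P; exists x0.1; rewrite !inE x0S /adjacent.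
    by apply/orP; right; apply/existsP; exists x0.2; rewrite -surjective_pairing Fx0.
  by move: (no_unique i); case: #|_| => [|[|k]].
case/card_gt1P => j1 [j2 []]; rewrite !inE => /andP [j1S /(slot_of _ j1S) [l1 F1]].
move=> /andP [j2S /(slot_of _ j2S) [l2 F2]] j12.
apply/card_gt1P; exists (j1, l1), (j2, l2); rewrite !inE j1S j2S F1 F2.
by split => //; apply: contraNneq j12 => -[-> _].
Qed.

Lemma no_unique_neighbour_small_image :
  exists2 W : {set 'I_m}, (#|W| <= 4 * #|S|)%N & F \in maps_into (slots S) W.
Proof.
(* Rows of I outside the diagonal rows D of S are hit by at least two slots of
   S, so there are at most 6|S| / 2 of them. *)
set D := [set i | widen_ord hmn i \in S]; set I := F @: slots S.
exists (D :|: I); last first.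
  by rewrite inE; apply/forall_inP => x xS; rewrite inE imset_f ?orbT.
have cardD : (#|D| <= #|S|)%N.
  have widen_inj : injective (widen_ord hmn) by move=> i k /(congr1 val) /= /val_inj.
  rewrite -(card_imset D widen_inj); apply: subset_leq_card.
  by apply/fintype.subsetP => j /imsetP [i]; rewrite inE => iS ->.
have cardID : (2 * #|I :\: D| <= 6 * #|S|)%N.
  rewrite -card_slots -(sum_card_fibres (slots S) F) mulnC -sum_nat_const.
  rewrite [X in (_ <= X)%N](bigID (mem (I :\: D))) /= (leq_trans _ (leq_addr _ _)) //.
  by apply: leq_sum => i; rewrite !inE => /andP [iD iI]; apply: slot_fibre_ge2.
have -> : D :|: I = D :|: (I :\: D).
  by apply/finset.setP => i; rewrite !finset.in_setU finset.in_setD; case: (i \in D).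
by apply: leq_trans (leq_card_setU D (I :\: D)).1 _; lia.
Qed.

End NoUniqueNeighbour.

(** * Random designs *)

Definition heavy_designs (m n L : nat) : {set {ffun 'I_n * 'I_6 -> 'I_m}} :=
  \bigcup_(A : {set 'I_n * 'I_6} | #|A| == L) \bigcup_(i : 'I_m) maps_into A [set i].

Definition non_expanding_designs (m n t : nat) : {set {ffun 'I_n * 'I_6 -> 'I_m}} :=
  \bigcup_(S : {set 'I_n} | #|S| == t) \bigcup_(W : {set 'I_m} | #|W| == (4 * t)%N)
    maps_into (slots S) W.

Lemma load_lt_of_not_heavy (m n L : nat) (F : {ffun 'I_n * 'I_6 -> 'I_m}) (i : 'I_m) :
  F \notin heavy_designs m n L -> (load F i < L)%N.
Proof.
rewrite ltnNge; apply: contra => /subset_of_card [A AF cardA].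
apply/bigcupP; exists A; first by rewrite cardA.
apply/bigcupP; exists i => //; rewrite inE; apply/forall_inP => x /(fintype.subsetP AF).
by rewrite !inE.
Qed.

Lemma unique_neighbour_of_expanding (m n s : nat) (hmn : (m <= n)%N)
    (F : {ffun 'I_n * 'I_6 -> 'I_m}) :
  (4 * s <= m)%N -> (forall t, (0 < t <= s)%N -> F \notin non_expanding_designs m n t) ->
  unique_neighbour (adjacent F) s.
Proof.
move=> s_le F_exp S /andP [S_gt0 S_le].
have [/existsP [i /eqP Si] | ] := boolP [exists i, #|[set j in S | adjacent F i j]| == 1%N].
  by exists i.
rewrite negb_exists => /forallP no_unique; exfalso.
have [W0 cardW0 FW0] := no_unique_neighbour_small_image hmn no_unique.
have [W W0W cardW] : exists2 W : {set 'I_m}, W0 \subset W & #|W| = (4 * #|S|)%N.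
  by apply: superset_of_card; rewrite cardW0 card_ord (leq_trans _ s_le) // leq_mul2l S_le.
have /F_exp/negP : (0 < #|S| <= s)%N by rewrite S_gt0.
apply.
apply/bigcupP; exists S => //; apply/bigcupP; exists W; first by rewrite cardW.
move: FW0; rewrite !inE => /forall_inP FW0; apply/forall_inP => x /FW0.
exact: (fintype.subsetP W0W).
Qed.

Lemma card_heavy_designs (m n L : nat) :
  (#|heavy_designs m n L| * m ^ L <= 'C(n * 6, L) * m * m ^ (n * 6))%N.
Proof.
have := @card_bigcup_maps_into _ _ _ _ (fun A : {set 'I_n * 'I_6} => #|A| == L) predT
  id (fun i : 'I_m => [set i]) L 1 (fun A AL => eqP AL) (fun i _ => cards1 i).
by rewrite card_sized_sets !card_prod !card_ord exp1n mul1n -mulnA.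
Qed.

Lemma card_non_expanding_designs (m n t : nat) :
  (#|non_expanding_designs m n t| * m ^ (6 * t)
     <= 'C(n, t) * 'C(m, 4 * t) * (4 * t) ^ (6 * t) * m ^ (n * 6))%N.
Proof.
have := @card_bigcup_maps_into _ _ _ _ (fun S : {set 'I_n} => #|S| == t)
  (fun W : {set 'I_m} => #|W| == (4 * t)%N) (@slots n) id (6 * t) (4 * t)
  (fun S St => etrans (card_slots S) (congr1 _ (eqP St))) (fun W Wt => eqP Wt).
by rewrite !card_sized_sets !card_prod !card_ord mulnA.
Qed.

Lemma exists_design_avoiding (m n L s : nat) :
  (0 < m)%N -> (4 * m * 'C(n * 6, L) <= m ^ L)%N ->
  (forall t, (0 < t)%N -> (t <= s)%N ->
     4 ^ t * ('C(n, t) * 'C(m, 4 * t) * (4 * t) ^ (6 * t)) <= m ^ (6 * t))%N ->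
  exists2 F : {ffun 'I_n * 'I_6 -> 'I_m}, F \notin heavy_designs m n L &
    forall t, (0 < t <= s)%N -> F \notin non_expanding_designs m n t.
Proof.
move=> m_gt0 heavy_le expand_le.
have mL_gt0 k : (0 < m ^ k)%N by rewrite expn_gt0 m_gt0.
have heavy_small : (4 * #|heavy_designs m n L| <= m ^ (n * 6))%N.
  apply: (leq_scaled_bound _ (card_heavy_designs m n L)) => //.
  by rewrite [('C(_, _) * m)%N]mulnC mulnA.
have expanding_small t : (t < s)%N ->
    (4 ^ t.+1 * #|non_expanding_designs m n t.+1| <= m ^ (n * 6))%N.
  by move=> ts; apply: (leq_scaled_bound _ (card_non_expanding_designs m n t.+1)); rewrite ?expand_le.
set U := heavy_designs m n L :|: \bigcup_(t < s) non_expanding_designs m n t.+1.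
have : (#|U| < #|{ffun 'I_n * 'I_6 -> 'I_m}|)%N.
  rewrite card_ffun card_prod !card_ord; apply: leq_ltn_trans (leq_card_setU _ _).1 _.
  apply: leq_ltn_trans (leq_add (leqnn _) (leq_card_bigcup _ _)) _.
  exact: (ltn_add_geometric_sum (b := fun t => #|non_expanding_designs m n t.+1|)).
rewrite -(cardsC U) -[X in (X < _)%N]addn0 ltn_add2l => /card_gt0P [F].
rewrite inE finset.in_setU negb_or => /andP [F_light F_expanding]; exists F => // t.
case/andP=> t_gt0 t_le; have t1_lt : (t.-1 < s)%N by rewrite prednK.
apply: contra F_expanding => Ft; apply/bigcupP; exists (Ordinal t1_lt) => //=.
by rewrite prednK.
Qed.

Lemma exists_good_design_of_counts (m n L s : nat) :
  (0 < m)%N -> (m <= n)%N -> (4 * s <= m)%N ->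
  (4 * m * 'C(n * 6, L) <= m ^ L)%N ->
  (forall t, (0 < t)%N -> (t <= s)%N ->
     4 ^ t * ('C(n, t) * 'C(m, 4 * t) * (4 * t) ^ (6 * t)) <= m ^ (6 * t))%N ->
  exists F : {ffun 'I_n * 'I_6 -> 'I_m},
    (forall i, load F i < L)%N /\ unique_neighbour (adjacent F) s.
Proof.
move=> m_gt0 hmn s_le heavy_le expand_le.
have [F F_light F_expanding] := exists_design_avoiding m_gt0 heavy_le expand_le.
exists F; split; first by move=> i; apply: load_lt_of_not_heavy.
exact: (unique_neighbour_of_expanding hmn s_le F_expanding).
Qed.

Lemma heavy_condition (m n L : nat) :
  (0 < L)%N -> (96 * n <= m * L)%N -> (4 * m <= 4 ^ L)%N ->
  (4 * m * 'C(n * 6, L) <= m ^ L)%N.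
Proof.
(* C(6n, L) <= (24 n / L)^L <= (m / 4)^L. *)
move=> L_gt0 n_le m_le; have LL_gt0 : (0 < L ^ L)%N by rewrite expn_gt0 L_gt0.
rewrite -(leq_pmul2r LL_gt0) -mulnA.
apply: leq_trans (leq_mul m_le (leq_bin_expn _ _)) _.
by rewrite mulnA -!expnMn leq_exp2r // mulnC; lia.
Qed.

Lemma expansion_condition (m n t : nat) :
  (0 < t)%N -> (4 ^ 8 * n * t <= m ^ 2)%N ->
  (4 ^ t * ('C(n, t) * 'C(m, 4 * t) * (4 * t) ^ (6 * t)) <= m ^ (6 * t))%N.
Proof.
(* By C(N, k) <= (4N / k)^k the left side is at most
   4^t (4^7 n t / m^2)^t m^(6t). *)
move=> t_gt0 nt_le.
have base : ((4 ^ t) ^ 8 * n ^ t * t ^ t <= (m ^ t) ^ 2)%N.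
  have swap (x k : nat) : ((x ^ t) ^ k = (x ^ k) ^ t)%N by rewrite -!expnM mulnC.
  by rewrite !swap -!expnMn leq_exp2r.
have expnMt (x k : nat) : (x ^ (k * t) = (x ^ t) ^ k)%N by rewrite mulnC expnM.
have bin_m := leq_bin_expn m (4 * t).
rewrite !expnMt expnMn in bin_m; rewrite !expnMt expnMn.
move: (leq_bin_expn n t) bin_m base.
set a := (4 ^ t)%N; set w := (t ^ t)%N; set p := (n ^ t)%N; set r := (m ^ t)%N.
set c1 := 'C(n, t); set c2 := 'C(m, 4 * t).
move=> bin_n bin_m base.
have w_gt0 : (0 < w)%N by rewrite expn_gt0 t_gt0.
have a_gt0 : (0 < a)%N by rewrite expn_gt0.
rewrite -(@leq_pmul2r (w * (a * w) ^ 4)); last by rewrite muln_gt0 w_gt0 expn_gt0 muln_gt0 a_gt0 w_gt0.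
have -> : (a * (c1 * c2 * (a * w) ^ 6) * (w * (a * w) ^ 4)
           = a ^ 7 * w ^ 6 * ((c1 * w) * (c2 * (a * w) ^ 4)))%N by ring.
apply: leq_trans (leq_mul (leqnn _) (leq_mul bin_n bin_m)) _.
have -> : (a ^ 7 * w ^ 6 * (a * p * (a ^ 4 * r ^ 4))
           = (a ^ 8 * p * w) * (a ^ 4 * w ^ 5 * r ^ 4))%N by ring.
apply: leq_trans (leq_mul base (leqnn _)) _.
by apply: eq_leq; ring.
Qed.

Lemma ltn_expn_of_mlogm_le (R : realType) (m n : nat) :
  (0 < m)%N -> (m%:R * ln (m%:R : R)) / 4 <= n%:R -> (m < 4 ^ (4 * (n %/ m).+1))%N.
Proof.
move=> m_gt0 m_log_le; set q := (n %/ m).+1.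
have m_pos : (0 : R) < m%:R by rewrite ltr0n.
have n_lt : (n%:R : R) < q%:R * m%:R by rewrite -natrM ltr_nat ltn_ceil.
have ln_lt : ln (m%:R : R) < 4 * q%:R.
  by rewrite -(ltr_pM2l m_pos) mulrCA; lra.
rewrite -(ltr_nat R) natrX -(lnK (_ : m%:R \in Num.pos)) ?posrE //.
apply: lt_le_trans (_ : expR (4 * q%:R) <= _); first by rewrite ltr_expR.
rewrite -[4 * _](mulr1) -natrM expRM_natl lerXn2r ?nnegrE ?expR_ge0 //.
exact: expR1_le4.
Qed.

Lemma ler_sqrt_design_load (R : rcfType) (m n : nat) :
  (0 < m)%N -> (m <= n)%N ->
  Num.sqrt ((96 * (n %/ m).+1 + 6)%N%:R * 13) <= 52 * Num.sqrt (n%:R / m%:R) :> R.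
Proof.
move=> m_gt0 hmn; have m_pos : (0 : R) < m%:R by rewrite ltr0n.
have -> : (52 : R) = Num.sqrt (52 ^+ 2) by rewrite sqrtr_sqr ger0_norm.
rewrite -sqrtrM ?sqr_ge0 // ler_sqrt; last first.
  by rewrite mulr_ge0 ?sqr_ge0 ?divr_ge0 ?ler0n.
rewrite mulrA ler_pdivlMr // -natrX -!natrM ler_nat.
have := leq_trunc_div n m; nia.
Qed.

Lemma exists_good_design (m n : nat) :
  (4 <= m)%N -> (m <= n)%N -> (m%:R * ln (m%:R : RR)) / 4 <= n%:R ->
  exists F : {ffun 'I_n * 'I_6 -> 'I_m},
    (forall i, load F i < 96 * (n %/ m).+1)%N /\
    unique_neighbour (adjacent F) (m ^ 2 %/ (4 ^ 8 * n)).
Proof.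
move=> m_ge4 hmn m_log_le; have m_gt0 : (0 < m)%N by apply: leq_trans m_ge4.
set q := (n %/ m).+1; set s := (m ^ 2 %/ (4 ^ 8 * n))%N.
have s_le : (s * (4 ^ 8 * n) <= m ^ 2)%N by apply: leq_trunc_div.
apply: exists_good_design_of_counts => //.
- apply: leq_trans (leq_mul_sqr_divn (4 ^ 8) hmn).
  by rewrite leq_mul2r -{1}(expn1 4) leq_exp2l ?orbT.
- apply: heavy_condition; first by rewrite muln_gt0.
    by have := ltn_ceil n m_gt0; rewrite -/q; nia.
  have := ltn_expn_of_mlogm_le m_gt0 m_log_le; rewrite -/q => m_lt.
  apply: (@leq_trans (4 ^ (4 * q).+1)); first by rewrite expnS leq_mul2l ltnW.
  by rewrite leq_exp2l // /q; lia.
- move=> t t_gt0 t_le; apply: expansion_condition => //.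
  by apply: leq_trans s_le; rewrite mulnC leq_mul2r t_le orbT.
Qed.

Theorem lemma2p7 :
  exists c C : RR, 0 < c /\ 0 < C /\
    forall m n : nat, (4 <= m)%N -> (m <= n)%N ->
      (m%:R * ln (m%:R : RR)) / 4 <= (n%:R : RR) ->
      exists (s : nat) (B : 'M[int]_(m, n)),
        c * (m%:R : RR) ^+ 2 / n%:R <= s%:R /\
        (s <= n)%N /\
        \rank (intmx B) = m /\
        (forall f : 'I_s -> 'I_n, injective f -> \rank (colsub f (intmx B)) = s) /\
        opnorm (intmx B) <= C * Num.sqrt ((n%:R : RR) / m%:R).
Proof.
exists (2 * 4 ^ 8)%N%:R^-1, 52; split; first by rewrite invr_gt0 ltr0n.
split; first lra.
move=> m n m_ge4 hmn m_log_le; have m_gt0 : (0 < m)%N by apply: leq_trans m_ge4.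
have n_gt0 : (0 < n)%N by apply: leq_trans hmn.
have [F [F_load F_unique]] := exists_good_design m_ge4 hmn m_log_le.
exists (maxn 1 (m ^ 2 %/ (4 ^ 8 * n))), (design_mx F); split; last split; last split.
- by rewrite -natrX ler_maxn1_divn.
- rewrite geq_max n_gt0 (leq_trans _ hmn) //.
  by apply: leq_trans (leq_mul_sqr_divn (4 ^ 8) hmn); rewrite leq_pmull.
- exact: rank_design_mx.
split=> [f f_inj|].
  by apply: rank_colsub_design_mx => //; apply: unique_neighbour_design_maxn1.
exact: le_trans (opnorm_design_mx F_load) (ler_sqrt_design_load _ m_gt0 hmn).
Qed.
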